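(* If $L$ is the random walk Laplacian of a connected graph $G$ with $n_0$ vertices and eigenvalues $\lambda_1\le\lambda_2\le\dots\le\lambda_{n_0}$, then $\|L\|_{2,s}\ge\lambda_{s-1}$.
   Context: $L=I-D^{-1}A$ with $A$ the adjacency matrix and $D$ the degree matrix. For a matrix $\Phi$, $\|\Phi\|_{2,s}:=\max_{S\subset[n_0],\,|S|=s}\|\Phi_S\|_{2}$, where $\Phi_S$ is the column submatrix indexed by $S$ and $\|\cdot\|_2$ is the spectral (operator) norm. *)

From HB Require Import structures.
From mathcomp Require Import all_boot all_order all_algebra.
From mathcomp Require Import boolp classical_sets reals.
Set Implicit Arguments. Unset Strict Implicit. Unset Printing Implicit Defensive.
Import Order.TTheory GRing.Theory Num.Theory.
Local Open Scope ring_scope.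
Local Open Scope classical_set_scope.

Definition simple_graph (n : nat) (e : rel 'I_n) : Prop :=
  symmetric e /\ irreflexive e.

Definition connected_graph (n : nat) (e : rel 'I_n) : Prop :=
  forall i j : 'I_n, connect e i j.

Definition deg (n : nat) (e : rel 'I_n) (i : 'I_n) : nat := #|[set j | e i j]|.

Definition adjmx (R : realType) (n : nat) (e : rel 'I_n) : 'M[R]_n :=
  \matrix_(i, j) (e i j)%:R.

Definition invdegmx (R : realType) (n : nat) (e : rel 'I_n) : 'M[R]_n :=
  \matrix_(i, j) (if i == j then ((deg e i)%:R)^-1 else 0).

Definition rw_laplacian (R : realType) (n : nat) (e : rel 'I_n) : 'M[R]_n :=
  1%:M - invdegmx R e *m adjmx R e.

Definition vnorm2 (R : realType) (n : nat) (x : 'cV[R]_n) : R :=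
  Num.sqrt (\sum_i (x i 0) ^+ 2).

Definition spec_norm (R : realType) (m n : nat) (M : 'M[R]_(m, n)) : R :=
  sup [set vnorm2 (M *m x) / vnorm2 x | x in [set x : 'cV[R]_n | x != 0]].

(* column submatrix Phi_S (columns indexed by S, in increasing order) *)
Definition colsubset (R : realType) (m n : nat) (Phi : 'M[R]_(m, n))
  (S : {set 'I_n}) : 'M[R]_(m, #|S|) :=
  colsub (fun k : 'I_#|S| => enum_val k) Phi.

Definition norm2s (R : realType) (m n : nat) (Phi : 'M[R]_(m, n)) (s : nat) : R :=
  \big[Num.max/0]_(S : {set 'I_n} | #|S| == s) spec_norm (colsubset Phi S).

Definition sorted_eigenvalues (R : realType) (n : nat) (M : 'M[R]_n) (lam : seq R) : Prop :=
  [/\ size lam = n, sorted <=%R lam &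
      char_poly M = \prod_(x <- lam) ('X - x%:P)].

From mathcomp Require Import all_boot all_order all_algebra.
From mathcomp Require Import classical_sets reals complex ring zify.
Import Order.TTheory GRing.Theory Num.Theory.
Local Open Scope ring_scope.
Set Implicit Arguments. Unset Strict Implicit. Unset Printing Implicit Defensive.

(* The random walk Laplacian L = I - D^-1 A is similar, through D^1/2, to the
   symmetric normalized Laplacian N = I - D^-1/2 A D^-1/2, so both have the
   spectrum λ_1 <= ... <= λ_n.  Fix S with |S| = s.  At most s - 2 eigenvalues
   lie below λ_(s-1), so a dimension count gives a nonzero y supported on S and
   orthogonal to every eigenvector of N with eigenvalue below λ_(s-1); then
   y^* N y >= λ_(s-1) |y|^2, hence the principal submatrix N_SS has an
   eigenvalue μ >= λ_(s-1).  If v is a real eigenvector for μ, then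
   x = D_S^-1/2 v satisfies (L_S x)_i = μ x_i for every i in S, so
   ||L_S||_2 >= |μ| >= λ_(s-1). *)

Lemma char_poly_similar (F : fieldType) n (A B P : 'M[F]_n) :
  P \in unitmx -> A *m P = P *m B -> char_poly A = char_poly B.
Proof.
move=> Pu eAB.
have eAB_poly : char_poly_mx A *m map_mx polyC P = map_mx polyC P *m char_poly_mx B.
  by rewrite /char_poly_mx mulmxBl mulmxBr -!map_mxM eAB scalar_mxC.
have := congr1 determinant eAB_poly; rewrite !det_mulmx det_map_mx /= [X in X = _]mulrC.
by move/mulfI; apply; rewrite polyC_eq0 -unitfE -unitmxE.
Qed.

Lemma nonzero_rV_ker (F : fieldType) m n (B : 'M[F]_(m, n)) : (n < m)%N ->
  exists2 y : 'rV[F]_m, y != 0 & y *m B = 0.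
Proof.
move=> nm; have : kermx B != 0.
  rewrite -mxrank_eq0 mxrank_ker subn_eq0 -ltnNge.
  exact: leq_ltn_trans (rank_leq_col B) nm.
by case/rowV0Pn => y /sub_kermxP yB y0; exists y.
Qed.

Local Notation colsub_of T := (colsub (fun k : 'I_#|T| => enum_val k)).

Definition principal_submx (T : Type) n (M : 'M[T]_n) (S : {set 'I_n}) : 'M[T]_#|S| :=
  mxsub (fun k : 'I_#|S| => enum_val k) (fun k : 'I_#|S| => enum_val k) M.

Lemma sum_supported (V : nmodType) n (S : {set 'I_n}) (f : 'I_n -> V) :
  (forall k, k \notin S -> f k = 0) -> \sum_k f k = \sum_(a < #|S|) f (enum_val a).
Proof.
move=> f0; rewrite (bigID (mem S)) /= [X in _ + X]big1 ?addr0; last by move=> k /f0.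
exact: big_enum_val.
Qed.

Section Support.
Variables (T : pzRingType) (n : nat) (S : {set 'I_n}).

Lemma principal_submx1 : principal_submx (1%:M : 'M[T]_n) S = 1%:M.
Proof. by apply/matrixP => a b; rewrite !mxE (inj_eq enum_val_inj). Qed.

Lemma mul_colsub_enum_eq0 m (y : 'rV[T]_m) (Q : 'M[T]_(m, n)) :
  y *m colsub_of S Q = 0 -> forall i, i \in S -> (y *m Q) 0 i = 0.
Proof.
move=> yQ i iS; have := congr1 (fun B : 'rV[T]_#|S| => B 0 (enum_rank_in iS i)) yQ.
by rewrite mulmx_colsub !mxE enum_rankK_in.
Qed.

Lemma colsub_supported_neq0 (y : 'rV[T]_n) :
  (forall j, j \notin S -> y 0 j = 0) -> y != 0 -> colsub_of S y != 0.
Proof.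
move=> y_supp /rV0Pn [j yj]; apply/rV0Pn.
have jS : j \in S by apply: contraNT yj => /y_supp ->.
by exists (enum_rank_in jS j); rewrite mxE enum_rankK_in.
Qed.

End Support.

Section Hermitian.
Local Open Scope sesquilinear_scope.
Variable C : numClosedFieldType.

Definition quadmx n (M : 'M[C]_n) (y : 'rV[C]_n) : C := (y *m M *m y^t*) 0 0.

Lemma quadmx_principal_submx n (S : {set 'I_n}) (M : 'M[C]_n) (y : 'rV[C]_n) :
  (forall j, j \notin S -> y 0 j = 0) ->
  quadmx (principal_submx M S) (colsub_of S y) = quadmx M y.
Proof.
move=> y_supp; rewrite /quadmx !mxE (sum_supported (S := S)); last first.
  by move=> k /y_supp yk; rewrite !mxE yk conjC0 mulr0.
apply: eq_bigr => a _; rewrite !mxE; congr (_ * _).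
rewrite (sum_supported (S := S)); last by move=> k /y_supp ->; rewrite mul0r.
by apply: eq_bigr => b _; rewrite !mxE.
Qed.

Lemma hermitian_spectralE n (A : 'M[C]_n) : A \is hermsymmx ->
  A = (spectralmx A)^t* *m diag_mx (spectral_diag A) *m spectralmx A.
Proof.
move=> hA; rewrite -invmx_unitary ?spectral_unitarymx //.
exact/orthomx_spectralP/hermitian_normalmx.
Qed.

Lemma hermitian_spectral_real n (A : 'M[C]_n) i : A \is hermsymmx ->
  spectral_diag A 0 i \is Num.real.
Proof. by move/hermitian_spectral_diag_real/mxOverP; apply. Qed.

Lemma char_poly_hermitian n (A : 'M[C]_n) : A \is hermsymmx ->
  char_poly A = \prod_(i < n) ('X - (spectral_diag A 0 i)%:P).
Proof.
move=> hA; have Pu := spectral_unitarymx A.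
rewrite (@char_poly_similar _ _ A (diag_mx (spectral_diag A)) ((spectralmx A)^t*)).
- by rewrite char_poly_trig ?diag_mx_is_trig //; apply: eq_bigr => i _; rewrite mxE eqxx.
- by rewrite -invmx_unitary // unitmx_inv unitarymx_unit.
- by rewrite {1}(hermitian_spectralE hA) -!mulmxA (unitarymxP Pu) mulmx1.
Qed.

Lemma quadmx_diag n (P : 'M[C]_n) (d y : 'rV[C]_n) :
  quadmx (P^t* *m diag_mx d *m P) y =
  \sum_i d 0 i * ((y *m P^t*) 0 i * ((y *m P^t*) 0 i)^*).
Proof.
rewrite /quadmx.
have -> : y *m (P^t* *m diag_mx d *m P) *m y^t* =
          (y *m P^t*) *m diag_mx d *m (y *m P^t*)^t*.
  by rewrite trmx_mul map_mxM trmxCK !mulmxA.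
by rewrite mxE; apply: eq_bigr => i _; rewrite mul_mx_diag !mxE mulrCA mulrA.
Qed.

Lemma quadmx1_unitary n (P : 'M[C]_n) (y : 'rV[C]_n) : P \is unitarymx ->
  quadmx 1%:M y = \sum_i (y *m P^t*) 0 i * ((y *m P^t*) 0 i)^*.
Proof.
move=> Pu; have -> : 1%:M = P^t* *m diag_mx (const_mx 1) *m P.
  by rewrite diag_const_mx mulmx1 -invmx_unitary // mulVmx ?unitarymx_unit.
by rewrite quadmx_diag; apply: eq_bigr => i _; rewrite mxE mul1r.
Qed.

Lemma hermitian_spectral_ge_rayleigh n (A : 'M[C]_n) (z : 'rV[C]_n) (l : C) :
  A \is hermsymmx -> l \is Num.real -> z != 0 ->
  l * quadmx 1%:M z <= quadmx A z -> exists i, l <= spectral_diag A 0 i.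
Proof.
move=> hA lr z0 hle.
have [/existsP //|/existsPn d_lt_l] := boolP [exists i, l <= spectral_diag A 0 i].
have Pu := spectral_unitarymx A; set c := z *m (spectralmx A)^t*.
have [j cj] : exists j, c 0 j != 0.
  apply/rV0Pn; apply: contraNneq z0 => c0.
  by rewrite -(mulmxKtV z Pu) // -/c c0 mul0mx.
have d_sub_l_lt0 i : spectral_diag A 0 i - l < 0.
  by rewrite subr_lt0 real_ltNge ?hermitian_spectral_real ?d_lt_l.
suff : quadmx A z - l * quadmx 1%:M z < 0 by rewrite subr_lt0 => /lt_geF; rewrite hle.
rewrite {1}(hermitian_spectralE hA) quadmx_diag (quadmx1_unitary _ Pu) -/c.
rewrite mulr_sumr -sumrB (bigD1 j) //= -mulrBl.
apply: ltr_wnDr; last by rewrite nmulr_rlt0 ?d_sub_l_lt0 ?mul_conjC_gt0.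
by apply: sumr_le0 => i _; rewrite -mulrBl nmulr_rle0 ?d_sub_l_lt0 ?mul_conjC_ge0.
Qed.

Lemma exists_supported_rayleigh_ge n (A : 'M[C]_n) (S : {set 'I_n}) (l : C) :
  A \is hermsymmx -> l \is Num.real ->
  (#|[set i | (spectral_diag A 0 i < l)%R]| + #|~: S| < n)%N ->
  exists2 y : 'rV[C]_n, y != 0 &
    (forall j, j \notin S -> y 0 j = 0) /\ l * quadmx 1%:M y <= quadmx A y.
Proof.
move=> hA lr; set I := [set i | (spectral_diag A 0 i < l)%R] => hcard.
(* The kernel of B consists of the y vanishing off S and orthogonal to the
   eigenvectors of A with eigenvalue below l. *)
pose B := row_mx (colsub_of (~: S) 1%:M) (colsub_of I ((spectralmx A)^t*)).
have [|y y0 /eqP] := @nonzero_rV_ker _ _ _ B; first by rewrite addnC.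
rewrite mul_mx_row row_mx_eq0 => /andP[/eqP yS /eqP yI].
exists y => //; split=> [j jS|].
  by have := mul_colsub_enum_eq0 yS (i := j); rewrite mulmx1 inE; apply.
rewrite {1}(hermitian_spectralE hA) quadmx_diag.
rewrite (quadmx1_unitary _ (spectral_unitarymx A)) mulr_sumr.
apply: ler_sum => i _; have [iI|iI] := boolP (i \in I).
  by rewrite (mul_colsub_enum_eq0 yI iI) !(mul0r, mulr0).
apply: ler_wpM2r; first exact: mul_conjC_ge0.
by move: iI; rewrite inE real_ltNge ?hermitian_spectral_real // negbK.
Qed.

End Hermitian.

(* MathComp's spectral theorem lives over a numClosedFieldType, so a real
   symmetric matrix is studied through its image in R[i]. *)
Section RealSymmetric.
Local Open Scope sesquilinear_scope.
Variable R : rcfType.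
Local Notation toC := (real_complex R).

Lemma map_complex_hermsymmx m (A : 'M[R]_m) : A^T = A -> map_mx toC A \is hermsymmx.
Proof.
move=> hA; apply/is_hermitianmxP; rewrite expr0 scale1r.
apply/matrixP => i j; rewrite !mxE -[in RHS]hA mxE; exact/esym/conjc_real.
Qed.

Lemma symmetric_eigenvalue_ge_rayleigh m (A : 'M[R]_m) (z : 'rV[R[i]]_m) (l : R) :
  A^T = A -> z != 0 ->
  (l%:C)%C * quadmx 1%:M z <= quadmx (map_mx toC A) z ->
  exists2 mu : R, l <= mu & eigenvalue A mu.
Proof.
move=> /map_complex_hermsymmx hA z0 hle.
have lr : (l%:C)%C \is Num.real by apply/complex_realP; exists l.
have [i hi] := hermitian_spectral_ge_rayleigh hA lr z0 hle.
set d := spectral_diag _ in hi; set mu := complex.Re (d 0 i).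
have hd : d 0 i = (mu%:C)%C by rewrite RRe_real ?hermitian_spectral_real.
exists mu; first by rewrite -lecR -hd.
have : root (char_poly (map_mx toC A)) (mu%:C)%C.
  rewrite char_poly_hermitian // -/d -hd; apply/rootP.
  by rewrite horner_prod (bigD1 i) //= hornerXsubC subrr mul0r.
by rewrite -map_char_poly fmorph_root -eigenvalue_root_char.
Qed.

Lemma card_spectral_lt m (A : 'M[R]_m) (lam : seq R) (l : R) :
  A^T = A -> char_poly A = \prod_(x <- lam) ('X - x%:P) ->
  #|[set i | (spectral_diag (map_mx toC A) 0 i < (l%:C)%C)%R]| = count (< l) lam.
Proof.
move=> /map_complex_hermsymmx hA cpA; set d := spectral_diag _.
pose dR i := complex.Re (d 0 i).
have hd i : d 0 i = ((dR i)%:C)%C by rewrite RRe_real ?hermitian_spectral_real.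
have cp : char_poly A = \prod_(i < m) ('X - (dR i)%:P).
  apply: (@map_poly_inj _ _ toC); rewrite map_char_poly char_poly_hermitian //.
  rewrite rmorph_prod; apply: eq_bigr => i _.
  by rewrite rmorphB /= map_polyX map_polyC /= -hd.
have pe : perm_eq lam [seq dR i | i <- index_enum 'I_m].
  by apply: prod_XsubC_eq; rewrite big_map -cp.
rewrite (permP pe) count_map -sum1_card -sum1_count; apply: eq_bigl => i.
by rewrite inE hd ltcR.
Qed.

Lemma principal_submx_eigenvalue_ge m (A : 'M[R]_m) (lam : seq R) (S : {set 'I_m}) l :
  A^T = A -> char_poly A = \prod_(x <- lam) ('X - x%:P) -> (count (< l) lam < #|S|)%N ->
  exists2 mu : R, l <= mu & eigenvalue (principal_submx A S) mu.
Proof.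
move=> A_sym cpA few_below.
have l_real : (l%:C)%C \is Num.real by apply/complex_realP; exists l.
have [|y y0 [y_supp y_ge]] :=
    exists_supported_rayleigh_ge (S := S) (map_complex_hermsymmx A_sym) l_real.
  rewrite (card_spectral_lt _ A_sym cpA).
  by rewrite -[X in (_ < X)%N](card_ord m) -(cardsC S) ltn_add2r.
apply: (symmetric_eigenvalue_ge_rayleigh (z := colsub_of S y)).
- by rewrite /principal_submx trmx_mxsub A_sym.
- exact: colsub_supported_neq0.
- by rewrite /principal_submx map_mxsub -principal_submx1 !quadmx_principal_submx.
Qed.

End RealSymmetric.

Lemma count_lt_nth_sorted (R : realDomainType) (lam : seq R) k x0 :
  sorted <=%R lam -> (k < size lam)%N ->
  (count (< nth x0 lam k)%R lam <= k)%N.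
Proof.
move=> so ks; rewrite -{2}(cat_take_drop k lam) count_cat.
have -> : count (< nth x0 lam k)%R (drop k lam) = 0%N.
  apply/eqP; rewrite -leqn0 leqNgt -has_count; apply/hasPn => x /(nthP x0) [m hm <-].
  rewrite nth_drop -leNgt; apply: (sorted_leq_nth le_trans lexx) => //.
    by rewrite inE -ltn_subRL -size_drop.
  by rewrite leq_addr.
by rewrite addn0 (leq_trans (count_size _ _)) // size_take ks.
Qed.

Lemma ler_sum_term (R : numDomainType) (I : finType) (F : I -> R) j :
  (forall i, 0 <= F i) -> F j <= \sum_i F i.
Proof. by move=> F0; rewrite (bigD1 j) //= lerDl sumr_ge0. Qed.

Section OperatorNorm.
Variable R : realType.

Lemma abs_le_vnorm2 m (x : 'cV[R]_m) j : `|x j 0| <= vnorm2 x.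
Proof.
rewrite /vnorm2 -sqrtr_sqr ler_sqrt ?sumr_ge0 // => [|i _]; last exact: sqr_ge0.
by apply: ler_sum_term => i; apply: sqr_ge0.
Qed.

Lemma vnorm2_le_sum_abs m (x : 'cV[R]_m) : vnorm2 x <= \sum_i `|x i 0|.
Proof.
have s0 : 0 <= \sum_i `|x i 0| by apply: sumr_ge0.
rewrite /vnorm2 -(ger0_norm s0) -sqrtr_sqr ler_sqrt ?sqr_ge0 //.
rewrite expr2 mulr_suml; apply: ler_sum => i _.
rewrite -real_normK ?num_real // expr2 ler_wpM2l //.
exact: ler_sum_term.
Qed.

Lemma vnorm2_mul_le m k (M : 'M[R]_(m, k)) (x : 'cV[R]_k) :
  vnorm2 (M *m x) <= (\sum_i \sum_j `|M i j|) * vnorm2 x.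
Proof.
apply: le_trans (vnorm2_le_sum_abs _) _; rewrite mulr_suml; apply: ler_sum => i _.
rewrite mxE mulr_suml; apply: le_trans (ler_norm_sum _ _ _) _.
by apply: ler_sum => j _; rewrite normrM ler_wpM2l ?abs_le_vnorm2.
Qed.

Lemma spec_norm_ge m k (M : 'M[R]_(m, k)) (x : 'cV[R]_k) :
  x != 0 -> vnorm2 (M *m x) / vnorm2 x <= spec_norm M.
Proof.
move=> x0; apply: sup_upper_bound; last by exists x.
split; first by exists (vnorm2 (M *m x) / vnorm2 x), x.
exists (\sum_i \sum_j `|M i j|) => _ [y _ <-].
have [->|y0] := eqVneq (vnorm2 y) 0.
  by rewrite invr0 mulr0; do 2!apply: sumr_ge0 => ? _.
by rewrite ler_pdivrMr ?vnorm2_mul_le // lt_def y0 sqrtr_ge0.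
Qed.

Lemma spec_norm_ge_eigen_rows m (S : {set 'I_m}) (M : 'M[R]_(m, #|S|))
    (x : 'cV[R]_#|S|) (mu : R) :
  x != 0 -> (forall a, (M *m x) (enum_val a) 0 = mu * x a 0) -> `|mu| <= spec_norm M.
Proof.
move=> x0 Mx; apply: le_trans (spec_norm_ge M x0).
have [b xb] : exists b, x b 0 != 0.
  by case/matrix0Pn: x0 => b [j]; rewrite ord1; exists b.
have xp : 0 < vnorm2 x.
  by apply: lt_le_trans (abs_le_vnorm2 x b); rewrite normr_gt0.
rewrite ler_pdivlMr // /vnorm2 -sqrtr_sqr -sqrtrM ?sqr_ge0 // ler_sqrt; last first.
  by apply: sumr_ge0 => i _; apply: sqr_ge0.
rewrite mulr_sumr [X in _ <= X](bigID (mem S)) /= [\sum_(i in S) _]big_enum_val.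
apply: ler_wpDr; first by apply: sumr_ge0 => i _; apply: sqr_ge0.
by apply: ler_sum => a _; rewrite Mx exprMn.
Qed.

Lemma norm2s_ge m k (M : 'M[R]_(m, k)) (S : {set 'I_k}) :
  spec_norm (colsubset M S) <= norm2s M #|S|.
Proof. exact: le_bigmax_cond. Qed.

End OperatorNorm.

Section NormalizedLaplacian.
Variables (R : realType) (n : nat) (e : rel 'I_n).
Hypothesis e_sym : symmetric e.
Hypothesis e_irr : irreflexive e.
Hypothesis deg_gt0 : forall i, (0 < deg e i)%N.

Definition sqrt_deg i : R := Num.sqrt (deg e i)%:R.

Definition norm_laplacian : 'M[R]_n :=
  \matrix_(i, j) ((i == j)%:R - (e i j)%:R / (sqrt_deg i * sqrt_deg j)).

Lemma sqrt_deg_neq0 i : sqrt_deg i != 0.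
Proof. by rewrite gt_eqF // sqrtr_gt0 ltr0n deg_gt0. Qed.

Lemma rw_laplacianE i j :
  rw_laplacian R e i j = (i == j)%:R - (e i j)%:R / (deg e i)%:R.
Proof.
rewrite !mxE (bigD1 i) //= big1 ?addr0 => [|k ki]; last first.
  by rewrite !mxE eq_sym (negbTE ki) mul0r.
by rewrite !mxE eqxx mulrC.
Qed.

Lemma rw_laplacian_similar i j :
  sqrt_deg i * rw_laplacian R e i j = norm_laplacian i j * sqrt_deg j.
Proof.
have di : (deg e i)%:R = sqrt_deg i * sqrt_deg i by rewrite -expr2 sqr_sqrtr ?ler0n.
rewrite rw_laplacianE mxE di; have [->|nij] := eqVneq i j.
  by rewrite e_irr mul0r !subr0 mulr1 mul1r.
by rewrite mulr0n; field; rewrite !sqrt_deg_neq0.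
Qed.

Lemma tr_norm_laplacian : norm_laplacian^T = norm_laplacian.
Proof. by apply/matrixP => i j; rewrite !mxE eq_sym e_sym [sqrt_deg j * _]mulrC. Qed.

Lemma char_poly_norm_laplacian : char_poly norm_laplacian = char_poly (rw_laplacian R e).
Proof.
apply: (@char_poly_similar _ _ _ _ (diag_mx (\row_i sqrt_deg i))).
  rewrite unitmxE det_diag unitfE; apply/prodf_neq0 => i _.
  by rewrite mxE sqrt_deg_neq0.
apply/matrixP => i j; rewrite mul_mx_diag mul_diag_mx !mxE.
by have := rw_laplacian_similar i j; rewrite !mxE => ->.
Qed.

Lemma spec_norm_colsubset_rw_laplacian_ge (S : {set 'I_n}) (mu : R) :
  eigenvalue (principal_submx norm_laplacian S) mu ->
  `|mu| <= spec_norm (colsubset (rw_laplacian R e) S).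
Proof.
case/eigenvalueP => v hv v0.
have L_N i j : rw_laplacian R e i j = norm_laplacian j i * sqrt_deg j / sqrt_deg i.
  have -> : norm_laplacian j i = norm_laplacian i j by rewrite -{1}tr_norm_laplacian mxE.
  by rewrite -rw_laplacian_similar [sqrt_deg i * _]mulrC mulfK ?sqrt_deg_neq0.
apply: (@spec_norm_ge_eigen_rows _ _ _ _ (\col_a (v 0 a / sqrt_deg (enum_val a)))).
  apply: contraNneq v0 => /matrixP x0; apply/eqP/rowP => a; have := x0 a 0.
  by rewrite !mxE => /eqP; rewrite mulf_eq0 invr_eq0 (negbTE (sqrt_deg_neq0 _)) orbF => /eqP.
move=> a; have := congr1 (fun w : 'rV_#|S| => w 0 a / sqrt_deg (enum_val a)) hv.
rewrite /= !mxE mulr_suml mulrA => <-; apply: eq_bigr => c _.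
rewrite [colsub _ _ _ _]mxE L_N [principal_submx _ _ _ _]mxE [(\col__ _) _ _]mxE.
by field; rewrite !sqrt_deg_neq0.
Qed.

End NormalizedLaplacian.

Lemma deg_gt0_connected n (e : rel 'I_n) :
  connected_graph e -> (1 < n)%N -> forall i, (0 < deg e i)%N.
Proof.
move=> conn n_gt1 i.
have [j ji] : exists j : 'I_n, j != i.
  pose j0 : 'I_n := Ordinal (ltnW n_gt1); pose j1 : 'I_n := Ordinal n_gt1.
  by have [<-|] := eqVneq j0 i; [exists j1 | exists j0].
have /connectP [[|k p] /= path_p last_p] := conn i j.
  by rewrite last_p eqxx in ji.
by apply/card_gt0P; exists k; rewrite inE; case/andP: path_p.
Qed.

Theorem mainTheorem7 (R : realType) (n0 : nat) (e : rel 'I_n0) (lam : seq R) (s : nat) :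
  simple_graph e -> connected_graph e ->
  sorted_eigenvalues (rw_laplacian R e) lam ->
  (2 <= s <= n0)%N ->
  nth 0 lam (s - 2) <= norm2s (rw_laplacian R e) s.
Proof.
move=> [e_sym e_irr] conn [lam_size lam_sorted char_L] /andP[s_ge2 s_le_n].
have deg_gt0 := deg_gt0_connected conn (leq_trans s_ge2 s_le_n).
have [S cardS] : exists S : {set 'I_n0}, #|S| = s.
  exists [set widen_ord s_le_n i | i : 'I_s]; rewrite card_imset ?card_ord //.
  by move=> i j /(congr1 val) /= ij; apply: val_inj.
have char_N := etrans (char_poly_norm_laplacian R e_irr deg_gt0) char_L.
have [|mu l_le_mu mu_eig] := principal_submx_eigenvalue_ge
    (S := S) (l := nth 0 lam (s - 2)) (tr_norm_laplacian R e_sym) char_N.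
  apply: leq_ltn_trans (count_lt_nth_sorted _ lam_sorted _) _; rewrite ?lam_size; lia.
apply: le_trans l_le_mu (le_trans (ler_norm mu) _); rewrite -cardS.
have := spec_norm_colsubset_rw_laplacian_ge e_sym e_irr deg_gt0 mu_eig.
by move/le_trans; apply; apply: norm2s_ge.
Qed.
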